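(* For every integer $m\ge2$ and every $\alpha\in[0,1]$, every deterministic social choice rule on $m$ candidates has distortion at least $2+\alpha-2(1-\alpha)/\lfloor m\rfloor_{\mathrm{even}}$ on $\alpha$-decisive metric spaces, where $\lfloor m\rfloor_{\mathrm{even}}$ is the largest even integer at most $m$.
   Context: An election: voters $V=\{1,\dots,n\}$, a fixed finite set $C$ of $m$ candidates, a profile $\sigma$ of linear orders over $C$. A distance function $d$ on $V\cup C$ is nonnegative, symmetric and satisfies the triangle inequality (co-location allowed); it is consistent with $\sigma$ if $d(i,c)\le d(i,c')$ whenever $i$ ranks $c$ above $c'$. $\mathrm{top}(i)$ is $i$'s first choice. $d$ is $\alpha$-decisive if $d(i,\mathrm{top}(i))\le\alpha\,d(i,c)$ for every voter $i$ and every $c\ne\mathrm{top}(i)$. $\mathrm{SC}(c)=\sum_{i\in V}d(i,c)$. A deterministic social choice rule maps each profile (any number of voters) to a candidate; its distortion on $\alpha$-decisive metric spaces is $\sup_\sigma\sup_d \mathrm{SC}(f(\sigma))/\min_c\mathrm{SC}(c)$ over $\alpha$-decisive $d$ consistent with $\sigma$. *)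

From HB Require Import structures.
From mathcomp Require Import all_boot all_order all_algebra all_fingroup.
From mathcomp Require Import reals.
Set Implicit Arguments. Unset Strict Implicit. Unset Printing Implicit Defensive.
Import Order.TTheory GRing.Theory Num.Theory.
Local Open Scope ring_scope.

(* A profile of n voters over the candidates 'I_m: voter i's linear order is
   given by the permutation (σ i), where (σ i c) is the position of candidate c
   in i's ranking (position 0 = first choice). *)
Definition profile (n m : nat) := 'I_n -> {perm 'I_m}.

Definition prefers n m (s : profile n m) (i : 'I_n) (c c' : 'I_m) : bool :=
  (s i c < s i c')%N.

Definition is_top n m (s : profile n m) (i : 'I_n) (c : 'I_m) : bool :=
  (nat_of_ord (s i c) == 0)%N.

Definition point (n m : nat) := ('I_n + 'I_m)%type.

(* distance function on V ∪ C (co-location allowed) *)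
Definition is_distance (R : realType) n m (d : point n m -> point n m -> R) : Prop :=
  [/\ (forall x y, 0 <= d x y),
      (forall x, d x x = 0),
      (forall x y, d x y = d y x) &
      (forall x y z, d x z <= d x y + d y z)].

Definition consistent (R : realType) n m (s : profile n m)
    (d : point n m -> point n m -> R) : Prop :=
  forall i c c', prefers s i c c' -> d (inl i) (inr c) <= d (inl i) (inr c').

Definition decisive (R : realType) (alpha : R) n m (s : profile n m)
    (d : point n m -> point n m -> R) : Prop :=
  forall i c c', is_top s i c -> c' != c ->
    d (inl i) (inr c) <= alpha * d (inl i) (inr c').

Definition SC (R : realType) n m (d : point n m -> point n m -> R) (c : 'I_m) : R :=
  \sum_(i < n) d (inl i) (inr c).

Definition social_choice_rule (m : nat) := forall n, profile n m -> 'I_m.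

Definition floor_even (m : nat) : nat := (m - odd m)%N.

From HB Require Import structures.
From mathcomp Require Import all_boot all_order all_algebra all_fingroup.
From mathcomp Require Import reals.
From mathcomp Require Import ring lra zify.
Set Implicit Arguments. Unset Strict Implicit. Unset Printing Implicit Defensive.
Import Order.TTheory GRing.Theory Num.Theory.
Local Open Scope ring_scope.

(* Let k = ⌊m/2⌋ and take 2k voters, split into the halves i < k and i >= k;
   candidates are split likewise (c < k against c >= k).  Voter i ranks
   candidate i first, then the rest of its own half, then the other half.
   Let s be the half of the rule's winner W.  In the metric, every point off
   half s sits at one common location, while a voter i on half s is at
   distance alpha from candidate i, at distance 1 from all other candidates
   and at distance 1 + alpha from the off-half voters.  An off-half candidate
   then has social cost k, whereas W costs at least
   (k - 1) + alpha + k (1 + alpha), giving the ratio 2 + alpha - (1 - alpha)/k.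
   The metric is realised as the combination (1 - alpha) d0 + alpha d1 of two
   star metrics: d0 puts each on-half voter together with its own candidate,
   d1 puts all on-half voters at the centre. *)

Section Metrics.

Variables (R : realType) (n m : nat).

(* Points of class t sit on a ray of length h t from a common centre; points
   of the same class are identified. *)
Definition star_dist (T : eqType) (cls : point n m -> T) (h : T -> R)
    (p q : point n m) : R :=
  if cls p == cls q then 0 else h (cls p) + h (cls q).

Lemma star_dist_is_distance (T : eqType) (cls : point n m -> T) (h : T -> R) :
  (forall t, 0 <= h t) -> is_distance (star_dist cls h).
Proof.
move=> h_ge0; split.
- by move=> p q; rewrite /star_dist; case: ifP => // _; apply: addr_ge0.
- by move=> p; rewrite /star_dist eqxx.
- by move=> p q; rewrite /star_dist eq_sym addrC.
move=> p q r; rewrite /star_dist.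
move: (cls p) (cls q) (cls r) => a b c.
have := h_ge0 a; have := h_ge0 b; have := h_ge0 c.
case: (eqVneq a c) => [<-|ac] ha hb hc.
  by apply: addr_ge0; case: ifP => // _; apply: addr_ge0.
case: (eqVneq a b) => [<-|ab]; first by rewrite (negbTE ac); lra.
case: (eqVneq b c) => [<-|bc]; lra.
Qed.

Lemma is_distance_conic (d1 d2 : point n m -> point n m -> R) (a b : R) :
  0 <= a -> 0 <= b -> is_distance d1 -> is_distance d2 ->
  is_distance (fun p q => a * d1 p q + b * d2 p q).
Proof.
move=> a_ge0 b_ge0 [ge0_1 refl1 sym1 tri1] [ge0_2 refl2 sym2 tri2]; split.
- by move=> p q; apply: addr_ge0; apply: mulr_ge0.
- by move=> p; rewrite refl1 refl2 !mulr0 addr0.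
- by move=> p q; rewrite sym1 sym2.
move=> p q r.
have := ler_wpM2l a_ge0 (tri1 p q r); have := ler_wpM2l b_ge0 (tri2 p q r).
rewrite !mulrDr; lra.
Qed.

End Metrics.

Lemma tperm_pred (T : finType) (P : pred T) (a b x : T) :
  P a = P b -> P (tperm a b x) = P x.
Proof. by move=> Pab; case: tpermP => [->|->|]. Qed.

Lemma sum_split_halves (R : realType) k (F : bool -> R) :
  \sum_(i < k + k) F (i < k)%N = k%:R * (F true + F false).
Proof.
rewrite big_split_ord /= mulrDr; congr (_ + _).
  rewrite (eq_bigr (fun=> F true)) => [|i _]; last by rewrite ltn_ord.
  by rewrite sumr_const card_ord mulr_natl.
rewrite (eq_bigr (fun=> F false)) => [|i _]; last by rewrite ltnNge leq_addr.
by rewrite sumr_const card_ord mulr_natl.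
Qed.

Lemma sum_indicator_le1 (R : realType) n (w : nat) :
  \sum_(i < n) ((w == i)%:R : R) <= 1.
Proof.
case: (ltnP w n) => [w_lt_n|n_le_w].
  rewrite (bigD1 (Ordinal w_lt_n)) //= eqxx big1 ?addr0 // => i.
  by rewrite -val_eqE /= eq_sym => /negbTE ->.
rewrite big1 ?ler01 // => i _.
by rewrite gtn_eqF // (leq_trans (ltn_ord i)).
Qed.

Section Instance.

Variables (k m : nat).
Hypotheses (k_gt0 : (0 < k)%N) (kk_le_m : (k + k <= m)%N).

Local Notation pt := (point (k + k) m).

Fact m_gt0 : (0 < m)%N.
Proof. by apply: leq_trans kk_le_m; rewrite addn_gt0 k_gt0. Qed.

Definition first_pos : 'I_m := Ordinal m_gt0.

Definition own_candidate (i : 'I_(k + k)) : 'I_m := widen_ord kk_le_m i.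

(* Voters of the upper half read the candidates in reverse order, so each
   voter lists its own half first; the transposition then brings the voter's
   own candidate to the front. *)
Definition half_order (i : 'I_(k + k)) : {perm 'I_m} :=
  if (i < k)%N then 1%g else perm (@rev_ord_inj m).

Definition ballots : profile (k + k) m :=
  fun i => (half_order i * tperm (half_order i (own_candidate i)) first_pos)%g.

Definition half_length (i : 'I_(k + k)) : nat :=
  if (i < k)%N then k else (m - k)%N.

Lemma half_order_lt i c :
  (half_order i c < half_length i)%N = ((c < k)%N == (i < k)%N).
Proof.
rewrite /half_order /half_length; case: ifP => _; first by rewrite perm1 eqb_id.
by rewrite permE /=; have := ltn_ord c; case: (ltnP c k) => /=; lia.
Qed.

Lemma ballots_lt i c :
  (ballots i c < half_length i)%N = ((c < k)%N == (i < k)%N).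
Proof.
rewrite /ballots permM (tperm_pred (P := fun x : 'I_m => x < half_length i)%N).
  exact: half_order_lt.
by rewrite /= half_order_lt eqxx /half_length; case: ifP => _; lia.
Qed.

Lemma ballots_own_candidate i : ballots i (own_candidate i) = first_pos.
Proof. by rewrite /ballots permM tpermL. Qed.

Lemma is_top_ballots i c : is_top ballots i c -> c = own_candidate i.
Proof.
move=> /eqP top_c; apply: (@perm_inj _ (ballots i)).
by apply: val_inj; rewrite ballots_own_candidate /= top_c.
Qed.

Lemma prefers_own_half i c c' :
  prefers ballots i c c' -> (c' < k)%N = (i < k)%N -> (c < k)%N = (i < k)%N.
Proof.
move=> c_c' c'_half.
have c'_lt : (ballots i c' < half_length i)%N by rewrite ballots_lt c'_half.
by have := ltn_trans c_c' c'_lt; rewrite ballots_lt => /eqP.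
Qed.

Variables (R : realType) (alpha : R).
Hypotheses (alpha_ge0 : 0 <= alpha) (alpha_le1 : alpha <= 1).

Definition index_of (p : pt) : nat :=
  match p with inl i => val i | inr c => val c end.

Definition on_half (s : bool) (p : pt) : bool := (index_of p < k)%N == s.

Definition own_class s (p : pt) : option nat :=
  if on_half s p then Some (index_of p) else None.

(* [None] is the centre (on-half voters); [Some None] collects every point off
   the half. *)
Definition hub_class s (p : pt) : option (option nat) :=
  if on_half s p then (if p is inr c then Some (Some (val c)) else None)
  else Some None.

Definition hub_weight (t : option (option nat)) : R := if t is None then 0 else 1.

Definition instance_dist s (p q : pt) : R :=
  (1 - alpha) * star_dist (own_class s) (fun=> 1 / 2) p q
  + alpha * star_dist (hub_class s) hub_weight p q.

Lemma instance_dist_is_distance s : is_distance (instance_dist s).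
Proof.
apply: is_distance_conic; rewrite ?subr_ge0 //.
  by apply: star_dist_is_distance => _; lra.
by apply: star_dist_is_distance => -[] //= _; apply: ler01.
Qed.

Lemma instance_dist_on_half s i c : on_half s (inl i) ->
  instance_dist s (inl i) (inr c) = if val c == val i then alpha else 1.
Proof.
rewrite /instance_dist /star_dist /own_class /hub_class /on_half /= => /eqP i_s.
case: (eqVneq (c < k)%N s) => [c_s|c_ns].
  by rewrite i_s eqxx /= (inj_eq Some_inj) eq_sym; case: eqP => _; lra.
have -> : (val c == val i) = false by apply: contraNF c_ns => /eqP ->; rewrite i_s.
by rewrite i_s eqxx /=; lra.
Qed.

Lemma instance_dist_off_half s i c : ~~ on_half s (inl i) ->
  instance_dist s (inl i) (inr c) = if on_half s (inr c) then 1 + alpha else 0.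
Proof.
rewrite /instance_dist /star_dist /own_class /hub_class => /negbTE i_ns.
by rewrite i_ns; case: (on_half s (inr c)) => /=; lra.
Qed.

Lemma on_half_same_index s i c :
  val c = val i -> on_half s (inr c) = on_half s (inl i).
Proof. by rewrite /on_half /= => ->. Qed.

Lemma consistent_instance s : consistent ballots (instance_dist s).
Proof.
move=> i c c' c_c'; have [i_s|i_ns] := boolP (on_half s (inl i)).
  rewrite !instance_dist_on_half //.
  have -> : (val c' == val i) = false.
    apply: contraTF c_c' => /eqP c'_i.
    have -> : c' = own_candidate i by exact: val_inj.
    by rewrite /prefers ballots_own_candidate ltn0.
  by case: ifP.
rewrite !instance_dist_off_half //.
case c'_s: (on_half s (inr c')); first by case: ifP => _ //; rewrite addr_ge0 // ler01.
have c'_half : (c' < k)%N = (i < k)%N.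
  by move: i_ns c'_s; rewrite /on_half /=; case: (c' < k)%N; case: (i < k)%N; case: s.
by move: i_ns; rewrite /on_half /= (prefers_own_half c_c' c'_half) => /negbTE ->.
Qed.

Lemma decisive_instance s : decisive alpha ballots (instance_dist s).
Proof.
move=> i c c' /is_top_ballots -> c'_ne.
have [i_s|i_ns] := boolP (on_half s (inl i)).
  rewrite !instance_dist_on_half // eqxx.
  have -> : (val c' == val i) = false.
    by apply: contraNF c'_ne => /eqP c'_i; apply/eqP/val_inj.
  by rewrite mulr1.
rewrite !instance_dist_off_half //.
have -> : on_half s (inr (own_candidate i)) = false by exact: negbTE i_ns.
by case: ifP => _; rewrite ?mulr0 // mulr_ge0 // addr_ge0 // ler01.
Qed.

Lemma exists_off_half s : exists O : 'I_m, ~~ on_half s (inr O).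
Proof.
have k_lt_m : (k < m)%N by apply: leq_trans kk_le_m; rewrite -{1}[k]addn0 ltn_add2l.
exists (if s then Ordinal k_lt_m else first_pos).
by rewrite /on_half; case: s => /=; rewrite ?ltnn ?k_gt0.
Qed.

Lemma SC_off_half s O : ~~ on_half s (inr O) -> SC (instance_dist s) O = k%:R.
Proof.
move=> O_ns; rewrite /SC.
rewrite (eq_bigr (fun i : 'I_(k + k) => if (i < k)%N == s then 1 else 0)).
  rewrite (sum_split_halves _ (fun b => if b == s then 1 else 0)).
  by case: (s); rewrite /= ?addr0 ?add0r mulr1.
move=> i _; rewrite -[(i < k)%N == s]/(on_half s (inl i)).
have [i_s|i_ns] := boolP (on_half s (inl i)).
  rewrite instance_dist_on_half //; case: eqP => // O_i.
  by move: O_ns; rewrite (on_half_same_index s O_i) i_s.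
by rewrite instance_dist_off_half // (negbTE O_ns).
Qed.

Lemma SC_on_half_ge s W : on_half s (inr W) ->
  k%:R + k%:R * (1 + alpha) - (1 - alpha) <= SC (instance_dist s) W.
Proof.
move=> W_s; rewrite /SC.
rewrite (eq_bigr (fun i : 'I_(k + k) => (if (i < k)%N == s then 1 else 1 + alpha)
   - (1 - alpha) * (val W == val i)%:R)); last first.
  move=> i _; rewrite -[(i < k)%N == s]/(on_half s (inl i)).
  have [i_s|i_ns] := boolP (on_half s (inl i)).
    by rewrite instance_dist_on_half //; case: eqP => _ /=; lra.
  rewrite instance_dist_off_half // W_s; case: eqP => [W_i|_]; last by rewrite mulr0 subr0.
  by move: i_ns; rewrite -(on_half_same_index s W_i) W_s.
rewrite sumrB (sum_split_halves _ (fun b => if b == s then 1 else 1 + alpha)) -mulr_sumr.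
have W_own_voter : (1 - alpha) * \sum_(i < k + k) (val W == val i)%:R <= 1 - alpha.
  by rewrite -[leRHS]mulr1 ler_wpM2l ?subr_ge0 ?sum_indicator_le1.
by case: (s) W_own_voter => /=; lra.
Qed.

End Instance.

Theorem theorem2 (R : realType) (m : nat) (hm : (2 <= m)%N) (alpha : R)
  (ha0 : 0 <= alpha) (ha1 : alpha <= 1) (f : social_choice_rule m)
  (eps : R) (heps : 0 < eps) :
  exists (n : nat) (s : profile n m) (d : point n m -> point n m -> R),
    [/\ is_distance d, consistent s d, decisive alpha s d &
      exists c : 'I_m, 0 < SC d c /\
        (2 + alpha - 2 * (1 - alpha) / (floor_even m)%:R - eps) * SC d c
          <= SC d (f n s)].
Proof.
pose k := m./2.
have k_gt0 : (0 < k)%N by rewrite /k -divn2; lia.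
have kk_le_m : (k + k <= m)%N by rewrite /k -divn2; lia.
have -> : floor_even m = (k + k)%N by rewrite /floor_even /k -divn2 -modn2; lia.
pose W := f _ (ballots k_gt0 kk_le_m).
pose s := (W < k)%N.
exists (k + k)%N, (ballots k_gt0 kk_le_m), (instance_dist alpha s).
split.
- exact: instance_dist_is_distance.
- exact: consistent_instance.
- exact: decisive_instance.
have W_s : @on_half k m s (inr W) := eqxx s.
have [O O_ns] := exists_off_half k_gt0 kk_le_m s.
exists O; rewrite SC_off_half //; split; first by rewrite ltr0n.
have := SC_on_half_ge ha1 W_s.
have k_pos : 0 < k%:R :> R by rewrite ltr0n.
have -> : (2 + alpha - 2 * (1 - alpha) / (k + k)%:R - eps) * k%:R
    = 2 * k%:R + alpha * k%:R - (1 - alpha) - eps * k%:R.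
  by rewrite natrD; field; lra.
have : 0 < eps * k%:R by apply: mulr_gt0.
lra.
Qed.
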